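(* Let $\mathcal{X}$ be a compact Polish space and $(\mathcal{Y},d_{\mathcal{Y}})$ a separable metric space. Then there is a metric $d_{\mathcal{X}}$ on $\mathcal{X}$ generating the topology of $\mathcal{X}$ such that the set of Lipschitz maps from $(\mathcal{X},d_{\mathcal{X}})$ to $(\mathcal{Y},d_{\mathcal{Y}})$ is uniformly dense in $C(\mathcal{X},\mathcal{Y})$.
   Context: $C(\mathcal{X},\mathcal{Y})$ is the set of continuous maps, with the topology of uniform convergence. *)

From HB Require Import structures.
From mathcomp Require Import all_boot all_order all_algebra.
From mathcomp Require Import all_classical all_reals topology.
Set Implicit Arguments. Unset Strict Implicit. Unset Printing Implicit Defensive.
Import Order.TTheory GRing.Theory Num.Theory.
Local Open Scope classical_set_scope.
Local Open Scope ring_scope.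

Definition is_metric (R : realType) (T : Type) (d : T -> T -> R) : Prop :=
  (forall x y, 0 <= d x y) /\
  (forall x y, d x y = 0 <-> x = y) /\
  (forall x y, d x y = d y x) /\
  (forall x y z, d x z <= d x y + d y z).

Definition metric_generates (R : realType) (T : topologicalType)
  (d : T -> T -> R) : Prop :=
  forall A : set T, open A <->
    (forall x, A x -> exists e : R, 0 < e /\ forall y, d x y < e -> A y).

Definition metric_complete (R : realType) (T : Type) (d : T -> T -> R) : Prop :=
  forall u : nat -> T,
    (forall e : R, 0 < e -> exists N, forall m n, (N <= m)%N -> (N <= n)%N ->
        d (u m) (u n) < e) ->
    exists l, forall e : R, 0 < e -> exists N, forall n, (N <= n)%N -> d (u n) l < e.

Definition polish (R : realType) (T : topologicalType) : Prop :=
  (exists D : set T, countable D /\ closure D = setT) /\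
  (exists d : T -> T -> R, is_metric d /\ metric_generates d /\ metric_complete d).

Definition metric_separable (R : realType) (T : Type) (d : T -> T -> R) : Prop :=
  exists D : set T, countable D /\
    forall y (e : R), 0 < e -> exists2 z, D z & d y z < e.

Definition continuous_into (R : realType) (X : topologicalType) (Y : Type)
  (dY : Y -> Y -> R) (f : X -> Y) : Prop :=
  forall x (e : R), 0 < e -> exists U : set X, [/\ open U, U x &
    forall u, U u -> dY (f x) (f u) < e].

Definition lipschitz (R : realType) (X Y : Type)
  (dX : X -> X -> R) (dY : Y -> Y -> R) (g : X -> Y) : Prop :=
  exists L : R, forall x x', dY (g x) (g x') <= L * dX x x'.

From HB Require Import structures.
From mathcomp Require Import all_boot all_order all_algebra.
From mathcomp Require Import all_classical all_reals topology.
From mathcomp Require Import lra.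
Import Order.TTheory GRing.Theory Num.Theory.
Local Open Scope classical_set_scope.
Local Open Scope ring_scope.
Set Implicit Arguments. Unset Strict Implicit.

(* C(X, Y) is separable, and a countable dense family (g_m) can be made
   Lipschitz all at once.  For separability fix finite 1/(k+1)-nets of X and a
   dense sequence (y_j) in Y; h lies in the cell (k, n, s) when it maps the
   1/(k+1)-ball around the i-th net point within 1/(n+1) of y_(s_i).  There are
   countably many cells, two maps in one cell are uniformly 2/(n+1)-close, and
   by uniform continuity every continuous map lies in a cell for each n, so one
   continuous map per nonempty cell gives a dense sequence.  Then
     dX x x' = d x x' + sup_m a_m dY (g_m x) (g_m x'),
   with a_m = 1/((m+1)(1+B_m)) for a bound B_m of dY on the range of g_m,
   makes every g_m (1/a_m)-Lipschitz; as the m-th term is at most 1/(m+1) and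
   finitely many terms are continuous, dX induces the topology of d. *)

Section CompactMetricSpace.
Variables (R : realType) (X : topologicalType) (d : X -> X -> R).
Hypotheses (dm : is_metric d) (dgen : metric_generates d).

Lemma metric_ball_open c r : open [set y | d c y < r].
Proof.
have [_ [_ [_ dT]]] := dm.
apply/dgen => y /= cy; exists (r - d c y); split; first by rewrite subr_gt0.
by move=> z yz; rewrite (le_lt_trans (dT c y z)) // -ltrBrDl.
Qed.

Lemma near_metric_ball c e : 0 < e -> \forall y \near c, d c y < e.
Proof.
move=> e0; apply: open_nbhs_nbhs; split; first exact: metric_ball_open.
by have [_ [dE _]] := dm; rewrite /= (proj2 (dE c c)).
Qed.

Lemma nbhs_metric_ball c (P : set X) :
  nbhs c P -> exists2 r, 0 < r & forall y, d c y < r -> P y.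
Proof.
rewrite nbhsE => -[U [Uo Uc] UP].
by have [r [r0 rU]] := proj1 (dgen U) Uo c Uc; exists r => // y /rU /UP.
Qed.

Lemma metric_generates_dominating (d' : X -> X -> R) :
  (forall x y, d x y <= d' x y) ->
  (forall x e, 0 < e -> \forall y \near x, d' x y < e) ->
  metric_generates d'.
Proof.
move=> dd' d'near A; split.
  move=> /(proj1 (dgen A)) Aball x Ax; have [e [e0 eA]] := Aball x Ax.
  by exists e; split => // y /(le_lt_trans (dd' x y)) /eA.
move=> Aball; rewrite openE => x Ax; have [e [e0 eA]] := Aball x Ax.
exact: filterS eA (d'near x e e0).
Qed.

Hypothesis cpt : compact [set: X].

Lemma compact_nbhs_cover (U : X -> set X) :
  (forall c, nbhs c (U c)) -> exists s : seq X, forall x, exists2 c, c \in s & U c x.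
Proof.
(* Otherwise the sets avoiding finitely many [U c] form a proper filter base,
   and a cluster point [x] of it would have to meet [U x]. *)
move=> Unbhs; apply: contrapT => nocover.
pose B (s : seq X) := [set x | forall c, c \in s -> ~ U c x].
have B_filter : Filter (filter_from [set: seq X] B).
  apply: filter_from_filter; first by exists [::].
  move=> s1 s2 _ _; exists (s1 ++ s2) => // x Bx.
  by split => c cs; apply: Bx; rewrite mem_cat cs ?orbT.
have B_proper : ProperFilter (filter_from [set: seq X] B).
  apply: filter_from_proper => s _; apply: contrapT => /forallNP Bs0.
  apply: nocover; exists s => x; apply: contrapT => /forall2NP xs.
  by apply: (Bs0 x) => c cs Ucx; have [] := xs c.
have [x [_ clx]] := cpt B_proper (@filterT _ _ B_filter).
have [y [By Uxy]] : B [:: x] `&` U x !=set0 by apply: clx; [exists [:: x] | exact: Unbhs].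
exact: (By x (mem_head _ _)).
Qed.

Lemma metric_net r : 0 < r -> exists s : seq X, forall x, exists2 c, c \in s & d c x < r.
Proof. by move=> r0; apply: compact_nbhs_cover => c; exact: near_metric_ball. Qed.

Variables (Y : Type) (dY : Y -> Y -> R).
Hypothesis dYm : is_metric dY.

Lemma continuous_into_near (f : X -> Y) : continuous_into dY f ->
  forall c e, 0 < e -> \forall x \near c, dY (f c) (f x) < e.
Proof.
move=> fc c e e0; have [U [Uo Uc fU]] := fc c e e0.
by apply: filterS fU _; exact: open_nbhs_nbhs.
Qed.

Lemma continuous_into_cst (y : Y) : continuous_into dY (fun _ : X => y).
Proof.
have [_ [dYE _]] := dYm; move=> x e e0; exists setT.
by split => // [|u _]; [exact: openT | rewrite (proj2 (dYE y y))].
Qed.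

Lemma continuous_into_bounded (f : X -> Y) : continuous_into dY f ->
  exists B, 0 <= B /\ forall x x', dY (f x) (f x') <= B.
Proof.
move=> fc; have [_ [_ [dYC dYT]]] := dYm.
have [s sP] := compact_nbhs_cover (fun c => continuous_into_near fc c ltr01).
pose M := \big[Order.max/0]_(c <- s) \big[Order.max/0]_(c' <- s) dY (f c) (f c').
exists (M + 2); split; first by rewrite addr_ge0 // bigmax_ge_id.
move=> x x'; have [c cs /= cx] := sP x; have [c' cs' /= cx'] := sP x'.
have Mcc' : dY (f c) (f c') <= M.
  by apply: (bigmax_sup_seq _ _ _ _ _ cs) => //; exact: le_bigmax_seq.
have := dYT (f x) (f c) (f x'); have := dYT (f c) (f c') (f x').
rewrite [dY (f x) (f c)]dYC; lra.
Qed.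

Lemma continuous_into_uniform (f : X -> Y) : continuous_into dY f ->
  forall e, 0 < e -> exists2 del, 0 < del &
    forall x x', d x x' < del -> dY (f x) (f x') < e.
Proof.
move=> fc e e0; have [_ [_ [dYC dYT]]] := dYm; have [_ [_ [_ dT]]] := dm.
have e20 : 0 < e / 2 by rewrite divr_gt0.
have /choice[r rP] : forall c, exists r,
    0 < r /\ forall x, d c x < r -> dY (f c) (f x) < e / 2.
  move=> c; have [r r0 rf] := nbhs_metric_ball (continuous_into_near fc c e20).
  by exists r.
have r20 c : 0 < r c / 2 by rewrite divr_gt0 // (proj1 (rP c)).
have [s sP] := compact_nbhs_cover (fun c => near_metric_ball c (r20 c)).
exists (\big[Order.min/1]_(c <- s) (r c / 2)) => [|x x' xx'].
  by apply: lt_bigmin => // c _; exact: r20.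
have [c cs /= cx] := sP x; have rc0 := r20 c.
have del_le : \big[Order.min/1]_(c <- s) (r c / 2) <= r c / 2 by exact: ge_bigmin_seq.
have cx' : d c x' < r c by have := dT c x x'; lra.
have cx_r : d c x < r c by lra.
have := proj2 (rP c) x cx_r; have := proj2 (rP c) x' cx'.
have := dYT (f x) (f c) (f x'); rewrite [dY (f x) (f c)]dYC; lra.
Qed.

End CompactMetricSpace.

Section LipschitzMetric.
Variables (R : realType) (X : topologicalType) (Y : Type).
Variables (d : X -> X -> R) (dY : Y -> Y -> R) (g : nat -> X -> Y) (B : nat -> R).
Hypotheses (dm : is_metric d) (dgen : metric_generates d) (dYm : is_metric dY).
Hypotheses (gc : forall m, continuous_into dY (g m)) (B_ge0 : forall m, 0 <= B m).
Hypothesis gB : forall m x x', dY (g m x) (g m x') <= B m.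

Definition lipschitz_weight m := ((m.+1)%:R * (1 + B m))^-1.

Definition weighted_dist m x x' := lipschitz_weight m * dY (g m x) (g m x').

Definition sup_weighted_dist x x' := sup (range (fun m => weighted_dist m x x')).

Definition lipschitz_metric x x' := d x x' + sup_weighted_dist x x'.

Lemma lipschitz_weight_gt0 m : 0 < lipschitz_weight m.
Proof. by rewrite invr_gt0 mulr_gt0 ?ltr0n // ltr_pwDl. Qed.

Lemma weighted_dist_ge0 m x x' : 0 <= weighted_dist m x x'.
Proof. by have [dY0 _] := dYm; rewrite mulr_ge0 // ltW ?lipschitz_weight_gt0. Qed.

Lemma weighted_dist_le m x x' : weighted_dist m x x' <= m.+1%:R^-1.
Proof.
rewrite /weighted_dist /lipschitz_weight invfM -mulrA ler_piMr ?invr_ge0 //.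
rewrite mulrC ler_pdivrMr ?mul1r ?ltr_pwDl //.
by have := gB m x x'; have := B_ge0 m; lra.
Qed.

Lemma weighted_dist_has_ubound x x' : has_ubound (range (fun m => weighted_dist m x x')).
Proof.
exists 1 => _ [m _ <-]; apply: le_trans (weighted_dist_le m x x') _.
by rewrite invf_le1 ?ler1n ?ltr0n.
Qed.

Lemma weighted_dist_le_sup m x x' : weighted_dist m x x' <= sup_weighted_dist x x'.
Proof. by apply: ub_le_sup; [exact: weighted_dist_has_ubound | exists m]. Qed.

Lemma sup_weighted_dist_le x x' b :
  (forall m, weighted_dist m x x' <= b) -> sup_weighted_dist x x' <= b.
Proof. by move=> wb; apply: ge_sup => [|_ [m _ <-]]; [exists (weighted_dist 0 x x'), 0%N|]. Qed.

Lemma sup_weighted_dist_ge0 x x' : 0 <= sup_weighted_dist x x'.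
Proof. exact: le_trans (weighted_dist_ge0 0 x x') (weighted_dist_le_sup 0 x x'). Qed.

Lemma lipschitz_metric_is_metric : is_metric lipschitz_metric.
Proof.
have [d0 [dE [dC dT]]] := dm; have [_ [dYE [dYC dYT]]] := dYm.
have S0 := sup_weighted_dist_ge0; rewrite /lipschitz_metric.
split; [|split; [|split]].
- by move=> x y; rewrite addr_ge0.
- move=> x y; split => [dxy0|<-].
    by apply/dE; have := d0 x y; have := S0 x y; lra.
  rewrite (proj2 (dE x x)) // add0r; apply/eqP; rewrite eq_le S0 andbT.
  by apply: sup_weighted_dist_le => m; rewrite /weighted_dist (proj2 (dYE _ _)) // mulr0.
- move=> x y; rewrite dC /sup_weighted_dist.
  suff -> : (fun m => weighted_dist m x y) = (fun m => weighted_dist m y x) by [].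
  by apply: funext => m; rewrite /weighted_dist dYC.
- move=> x y z; have := dT x y z.
  have : sup_weighted_dist x z <= sup_weighted_dist x y + sup_weighted_dist y z.
    apply: sup_weighted_dist_le => m.
    apply: le_trans (lerD (weighted_dist_le_sup m x y) (weighted_dist_le_sup m y z)).
    by rewrite /weighted_dist -mulrDr ler_wpM2l ?dYT // ltW ?lipschitz_weight_gt0.
  lra.
Qed.

Lemma near_sup_weighted_dist x e : 0 < e -> \forall y \near x, sup_weighted_dist x y <= e.
Proof.
move=> e0; have [N] := ltr_add_invr e0; rewrite add0r => Ne.
have : \forall y \near x, forall i : 'I_N, weighted_dist i x y <= e.
  apply: filter_forall => i.
  have e_w := divr_gt0 e0 (lipschitz_weight_gt0 i).
  apply: filterS (continuous_into_near (gc i) x e_w) => y.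
  by rewrite ltr_pdivlMr ?lipschitz_weight_gt0 // mulrC => /ltW.
apply: filterS => y small; apply: sup_weighted_dist_le => m.
have [mN|Nm] := ltnP m N; first exact: (small (Ordinal mN)).
apply: le_trans (weighted_dist_le m x y) _; apply/ltW/(le_lt_trans _ Ne).
by rewrite lef_pV2 ?posrE ?ltr0n // ler_nat.
Qed.

Lemma lipschitz_metric_generates : metric_generates lipschitz_metric.
Proof.
apply: (metric_generates_dominating dgen) => [x y|x e e0].
  by rewrite lerDl sup_weighted_dist_ge0.
have e20 : 0 < e / 2 by rewrite divr_gt0.
apply: filterS2 (near_metric_ball dm dgen x e20) (near_sup_weighted_dist x e20) => y.
by rewrite /lipschitz_metric; lra.
Qed.

Lemma lipschitz_metric_lipschitz m : lipschitz lipschitz_metric dY (g m).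
Proof.
have w0 := lipschitz_weight_gt0 m; exists (lipschitz_weight m)^-1 => x x'.
have -> : dY (g m x) (g m x') = (lipschitz_weight m)^-1 * weighted_dist m x x'.
  by rewrite /weighted_dist mulKf ?gt_eqF.
apply: ler_wpM2l; first by rewrite invr_ge0 ltW.
apply: le_trans (weighted_dist_le_sup m x x') _.
by have [d0 _] := dm; rewrite /lipschitz_metric lerDr.
Qed.

End LipschitzMetric.

Lemma metric_separable_seq (R : realType) (Y : Type) (dY : Y -> Y -> R) (y0 : Y) :
  metric_separable dY -> exists y : nat -> Y, forall z e, 0 < e -> exists j, dY z (y j) < e.
Proof.
case=> D [/countable_injP[code code_inj] D_dense].
have /choice[y yP] : forall j, exists z, (exists2 w, D w & code w = j) -> D z /\ code z = j.
  move=> j; have [[w Dw wj]|none] := pselect (exists2 w, D w & code w = j).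
    by exists w.
  by exists y0.
exists y => z e e0; have [w Dw zw] := D_dense z e e0; exists (code w).
have [Dy cy] := yP (code w) (ex_intro2 _ _ w Dw erefl).
by rewrite (code_inj _ _ (mem_set Dy) (mem_set Dw) cy).
Qed.

Section ContinuousMapsSeparable.
Variables (R : realType) (X : topologicalType) (Y : Type).
Variables (d : X -> X -> R) (dY : Y -> Y -> R) (y : nat -> Y) (net : nat -> seq X).
Hypotheses (dm : is_metric d) (dgen : metric_generates d) (cpt : compact [set: X]).
Hypotheses (dYm : is_metric dY) (y_dense : forall z e, 0 < e -> exists j, dY z (y j) < e).
Hypothesis netP : forall k x, exists2 c, c \in net k & d c x < k.+1%:R^-1.

Definition in_cell k n (s : seq nat) (h : X -> Y) : Prop :=
  forall i x, (i < size (net k))%N -> d (nth x (net k) i) x < k.+1%:R^-1 ->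
    dY (y (nth 0%N s i)) (h x) < n.+1%:R^-1.

Lemma in_cell_close k n s h h' : in_cell k n s h -> in_cell k n s h' ->
  forall x, dY (h x) (h' x) < n.+1%:R^-1 *+ 2.
Proof.
move=> hk h'k x; have [_ [_ [dYC dYT]]] := dYm; have [c cnet cx] := netP k x.
have ik : (index c (net k) < size (net k))%N by rewrite index_mem.
have := hk _ x ik; have := h'k _ x ik; rewrite nth_index // => /(_ cx) h'x /(_ cx) hx.
have := dYT (h x) (y (nth 0%N s (index c (net k)))) (h' x).
rewrite [dY (h x) (y _)]dYC mulr2n => tri; exact: le_lt_trans tri (ltrD hx h'x).
Qed.

Lemma continuous_in_cell f : continuous_into dY f -> forall n, exists k s, in_cell k n s f.
Proof.
move=> fc n; have [_ [_ [dYC dYT]]] := dYm.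
have r0 : 0 < n.+1%:R^-1 / 2 :> R by rewrite divr_gt0 // invr_gt0 ltr0n.
have [del del0 f_del] := continuous_into_uniform dm dgen cpt dYm fc r0.
have [k] := ltr_add_invr del0; rewrite add0r => k_del.
have /choice[j jP] : forall c, exists j, dY (f c) (y j) < n.+1%:R^-1 / 2.
  by move=> c; exact: y_dense.
exists k, (map j (net k)) => i x ik cx; rewrite (nth_map x) //.
set c := nth x (net k) i in cx *.
have := f_del _ _ (lt_trans cx k_del); have := jP c.
have := dYT (y (j c)) (f c) (f x); rewrite [dY (y _) (f c)]dYC; set r := n.+1%:R^-1; lra.
Qed.

Lemma continuous_maps_dense_seq : exists g : nat -> X -> Y,
  (forall m, continuous_into dY (g m)) /\
  forall f, continuous_into dY f -> forall e, 0 < e ->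
    exists m, forall x, dY (f x) (g m x) < e.
Proof.
have cst := continuous_into_cst dYm (y 0%N).
have /choice[g gP] : forall m, exists h, continuous_into dY h /\
    forall k n s, unpickle m = Some (k, n, s) ->
      (exists f, continuous_into dY f /\ in_cell k n s f) -> in_cell k n s h.
  move=> m; case: (unpickle m) => [[[k n] s]|]; last by exists (fun=> y 0%N).
  have [[f [fc fk]]|none] := pselect (exists f, continuous_into dY f /\ in_cell k n s f).
    by exists f; split => // _ _ _ [<- <- <-].
  by exists (fun=> y 0%N); split => // _ _ _ [<- <- <-] /none.
exists g; split => [m|f fc e e0]; first by case: (gP m).
have e20 : 0 < e / 2 by rewrite divr_gt0.
have [n] := ltr_add_invr e20; rewrite add0r => ne.
have [k [s fk]] := continuous_in_cell fc n.
exists (pickle (k, n, s)) => x; have [_ gk] := gP (pickle (k, n, s)).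
have := in_cell_close fk (gk _ _ _ (pickleK _) (ex_intro _ f (conj fc fk))) x.
by rewrite mulr2n; set r := n.+1%:R^-1 in ne *; lra.
Qed.

End ContinuousMapsSeparable.

Theorem mainTheorem9 (R : realType) (X : topologicalType) (Y : Type)
  (dY : Y -> Y -> R) :
  compact [set: X] -> polish R X ->
  is_metric dY -> metric_separable dY ->
  exists dX : X -> X -> R, [/\ is_metric dX, metric_generates dX &
    forall f : X -> Y, continuous_into dY f ->
      forall e : R, 0 < e ->
        exists2 g : X -> Y, lipschitz dX dY g &
          forall x, dY (f x) (g x) < e].
Proof.
move=> cpt [_ [d [dm [dgen _]]]] dYm Ysep.
have [[y0]|Y0] := pselect (inhabited Y); last first.
  exists d; split => // f _ e _.
  by exists f => [|x]; [exists 0 => x|]; case: Y0; exact: inhabits (f x).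
have [y y_dense] := metric_separable_seq y0 Ysep.
have /choice[net netP] : forall k, exists s : seq X,
    forall x, exists2 c, c \in s & d c x < k.+1%:R^-1.
  by move=> k; apply: metric_net => //; rewrite invr_gt0 ltr0n.
have [g [gc g_dense]] := continuous_maps_dense_seq dm dgen cpt dYm y_dense netP.
have /choice[B BP] := fun m => continuous_into_bounded cpt dYm (gc m).
have B_ge0 m := (BP m).1; have gB m := (BP m).2.
exists (lipschitz_metric d dY g B); split.
- by apply: lipschitz_metric_is_metric.
- by apply: lipschitz_metric_generates.
- move=> f fc e e0; have [m fm] := g_dense f fc e e0.
  by exists (g m) => //; apply: lipschitz_metric_lipschitz.
Qed.
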